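(* Let $\nu>0$, $K>0$ and $d\in\mathbb{N}$, $d\ge2$. Define $\tau_0=\nu$ and $\tau_s=2\tau_{s-1}+3$ for $s\ge1$. There exists $p\in\mathbb{N}$ with the following property. Let $\theta_1,\ldots,\theta_p$ be irrational numbers for which there exists $C>0$ such that for every choice of pairwise distinct indices $i_1,\ldots,i_d\in\{1,\ldots,p\}$ and every $k\in\mathbb{Z}\setminus\{0\}$, $\max_{1\le m\le d}\|k\theta_{i_m}\|\ge C|k|^{-\nu}$. Then for every sufficiently large $U>0$ and every $V$ with $U\le V\le U^K$, there exist $k\in\{1,\ldots,p\}$ and integers $l<n$ such that $l,l+1,\ldots,n-1\in\mathcal{A}_{\tau_{d-1}}(\theta_k)$ and $$q_{k,l}\le U\le V\le q_{k,n}.$$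
   Context: $\|x\|$ is the distance from $x$ to the nearest integer. For an irrational $\alpha$, $(q_n)_{n\ge1}$ denotes the increasing sequence of denominators of the best rational approximations (convergents) of $\alpha$: $q_1=1$ and $\|k\alpha\|>\|q_n\alpha\|$ for all $0<k<q_{n+1}$, $k\ne q_n$. For $\theta_j$ this sequence is written $(q_{j,n})_n$. For $\tau>0$, $\mathcal{A}_\tau(\theta_j)=\{s\in\mathbb{N}: q_{j,s+1}\le q_{j,s}^\tau\}$; a run $l,\ldots,n-1$ of consecutive elements of $\mathcal{A}_\tau(\theta_j)$ is called a Diophantine string of exponent $\tau$. *)

From Stdlib Require Import Reals Lra Lia.
Open Scope R_scope.

Definition dist_nint (x : R) : R :=
  Rmin (x - IZR (Int_part x)) (IZR (Int_part x) + 1 - x).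

Definition irrational (x : R) : Prop :=
  ~ exists (a b : Z), (b <> 0)%Z /\ x = IZR a / IZR b.

(* q is the sequence (q_n)_{n>=1} of denominators of the best rational
   approximations of alpha, as characterized in the paper:
   q_1 = 1, (q_n) increasing, and ||k alpha|| > ||q_n alpha|| for all
   0 < k < q_{n+1}, k <> q_n.  (q 0 is unused.) *)
Definition best_approx_denoms (alpha : R) (q : nat -> nat) : Prop :=
  q 1%nat = 1%nat /\
  (forall n, (1 <= n)%nat -> (q n < q (S n))%nat) /\
  (forall n k, (1 <= n)%nat -> (0 < k)%nat -> (k < q (S n))%nat -> k <> q n ->
     dist_nint (INR k * alpha) > dist_nint (INR (q n) * alpha)).

Definition in_A (tau : R) (q : nat -> nat) (s : nat) : Prop :=
  (1 <= s)%nat /\ INR (q (S s)) <= Rpower (INR (q s)) tau.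

Fixpoint tau_seq (nu : R) (s : nat) : R :=
  match s with
  | O => nu
  | S s' => 2 * tau_seq nu s' + 3
  end.

From Stdlib Require Import Reals ZArith Lra Lia List Classical IndefiniteDescription.
Open Scope R_scope.

(* Suppose that for given U <= V <= U^K no theta_k has a Diophantine string of exponent
   tau = tau_(d-1) with q_(k,l) <= U <= V <= q_(k,n).  Then every theta_j has an index
   s_j outside A_tau(theta_j) with a_j := q_(j,s_j) <= V and b_j := q_(j,s_j+1) > U,
   b_j > a_j^tau.  Cut [0, K ln U] into N windows of width w = ln U / (2 D^2), where
   D = d (1 + nu); for p > N (d - 1) some d of the numbers ln a_j fall into one window.
   Their product Q is a multiple of each of these a_j, so by Dirichlet's theorem
   ||Q theta_j|| <= (Q / a_j) ||a_j theta_j|| <= (Q / a_j) / b_j.  As the a_j are of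
   comparable size and tau >= D, this is smaller than C Q^(-nu) for all d indices once
   U is large, contradicting the joint Diophantine condition. *)

Lemma dist_nint_le_Z (x : R) (z : Z) : dist_nint x <= Rabs (x - IZR z).
Proof.
  unfold dist_nint. destruct (base_Int_part x) as [Hlo Hhi].
  destruct (Z.le_gt_cases z (Int_part x)) as [Hz|Hz].
  - apply IZR_le in Hz. apply Rle_trans with (x - IZR (Int_part x)); [apply Rmin_l|].
    rewrite Rabs_right; lra.
  - assert (Hz1 : IZR (Int_part x + 1) <= IZR z) by (apply IZR_le; lia).
    rewrite plus_IZR in Hz1.
    apply Rle_trans with (IZR (Int_part x) + 1 - x); [apply Rmin_r|].
    rewrite Rabs_left1; lra.
Qed.

Lemma dist_nint_attained (x : R) : exists z, dist_nint x = Rabs (x - IZR z).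
Proof.
  unfold dist_nint. destruct (base_Int_part x) as [Hlo Hhi]. apply Rmin_case.
  - exists (Int_part x). rewrite Rabs_right; lra.
  - exists (Int_part x + 1)%Z. rewrite plus_IZR, Rabs_left1; lra.
Qed.

Lemma dist_nint_nat_mul_le (m : nat) (x : R) : dist_nint (INR m * x) <= INR m * dist_nint x.
Proof.
  destruct (dist_nint_attained x) as [z ->].
  apply Rle_trans with (1 := dist_nint_le_Z _ (Z.of_nat m * z)).
  rewrite mult_IZR, <- INR_IZR_INZ, <- Rmult_minus_distr_l, Rabs_mult.
  rewrite (Rabs_pos_eq (INR m)) by apply pos_INR. lra.
Qed.

Lemma dist_nint_le_one_minus_frac (x : R) : dist_nint x <= 1 - frac_part x.
Proof. unfold dist_nint, frac_part. apply Rle_trans with (1 := Rmin_r _ _). lra. Qed.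

Lemma dist_nint_nat_sub_le (x y : nat) (th : R) : (x <= y)%nat ->
  dist_nint (INR (y - x) * th) <= Rabs (frac_part (INR y * th) - frac_part (INR x * th)).
Proof.
  intros Hxy.
  apply Rle_trans with (1 := dist_nint_le_Z _ (Int_part (INR y * th) - Int_part (INR x * th))).
  rewrite minus_INR, minus_IZR by exact Hxy. unfold frac_part.
  right. f_equal. ring.
Qed.

Definition nat_floor (y : R) : nat := Z.to_nat (Int_part y).

Lemma nat_floor_spec (y : R) : 0 <= y -> INR (nat_floor y) <= y < INR (nat_floor y) + 1.
Proof.
  intros Hy. unfold nat_floor. destruct (base_Int_part y) as [Hlo Hhi].
  assert (Hpos : (0 <= Int_part y)%Z).
  { assert (-1 < Int_part y)%Z by (apply lt_IZR; lra). lia. }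
  rewrite INR_IZR_INZ, Z2Nat.id by exact Hpos. lra.
Qed.

Lemma nat_floor_lt (y : R) (n : nat) : 0 <= y -> y < INR n -> (nat_floor y < n)%nat.
Proof. intros Hy Hyn. apply INR_lt. pose proof (nat_floor_spec y Hy). lra. Qed.

Lemma length_filter_filter_le {A : Type} (f g : A -> bool) (l : list A) :
  (length (filter f (filter g l)) <= length (filter f l))%nat.
Proof.
  induction l as [|x l IH]; simpl; [lia|].
  destruct (g x), (f x) eqn:Hfx; simpl; rewrite ?Hfx; simpl; lia.
Qed.

Lemma pigeonhole_filter (cl : nat -> nat) (m N : nat) (l : list nat) :
  (forall x, In x l -> (cl x < N)%nat) -> (N * m < length l)%nat ->
  exists c, (m < length (filter (fun x => Nat.eqb (cl x) c) l))%nat.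
Proof.
  revert l. induction N as [|N IH]; intros l Hcl Hlen.
  - destruct l as [|x l]; simpl in Hlen; [lia|].
    specialize (Hcl x (or_introl eq_refl)). lia.
  - destruct (Nat.lt_ge_cases m (length (filter (fun x => Nat.eqb (cl x) N) l))) as [Hbig|Hsmall].
    + exists N. exact Hbig.
    + pose proof (filter_length (fun x => Nat.eqb (cl x) N) l) as Hsplit.
      destruct (IH (filter (fun x => negb (Nat.eqb (cl x) N)) l)) as [c Hc].
      * intros x Hx. apply filter_In in Hx as [Hx Hneq].
        apply Bool.negb_true_iff, Nat.eqb_neq in Hneq. specialize (Hcl x Hx). lia.
      * lia.
      * exists c. pose proof (length_filter_filter_le (fun x => Nat.eqb (cl x) c)
                                 (fun x => negb (Nat.eqb (cl x) N)) l). lia.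
Qed.

Lemma pigeonhole_injection (cl : nat -> nat) (N d p : nat) :
  (forall j, (j < p)%nat -> (cl j < N)%nat) -> (N * (d - 1) < p)%nat ->
  exists c (i : nat -> nat),
    (forall m, (m < d)%nat -> (i m < p)%nat /\ cl (i m) = c) /\
    (forall m m', (m < d)%nat -> (m' < d)%nat -> i m = i m' -> m = m').
Proof.
  intros Hcl Hp.
  destruct (pigeonhole_filter cl (d - 1) N (seq 0 p)) as [c Hc].
  { intros x Hx. apply in_seq in Hx. apply Hcl. lia. }
  { rewrite length_seq. exact Hp. }
  set (F := filter (fun x => Nat.eqb (cl x) c) (seq 0 p)) in Hc.
  exists c, (fun m => nth m F 0%nat). split.
  - intros m Hm. assert (HF : In (nth m F 0%nat) F) by (apply nth_In; lia).
    apply filter_In in HF as [Hseq Hcls].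
    apply in_seq in Hseq. apply Nat.eqb_eq in Hcls. split; [lia|exact Hcls].
  - intros m m' Hm Hm'. apply NoDup_nth; [apply NoDup_filter, seq_NoDup|lia|lia].
Qed.

Lemma exists_clustered_indices (x : nat -> R) (w : R) (N d p : nat) :
  0 < w -> (forall j, (1 <= j <= p)%nat -> 0 <= x j < INR N * w) -> (N * (d - 1) < p)%nat ->
  exists i : nat -> nat,
    (forall m, (m < d)%nat -> (1 <= i m <= p)%nat) /\
    (forall m m', (m < d)%nat -> (m' < d)%nat -> i m = i m' -> m = m') /\
    (forall m m', (m < d)%nat -> (m' < d)%nat -> x (i m') <= x (i m) + w).
Proof.
  intros Hw Hx Hp.
  set (cl j := nat_floor (x (S j) / w)).
  assert (Hcl : forall j, (j < p)%nat ->
    INR (cl j) <= x (S j) / w < INR (cl j) + 1 /\ (cl j < N)%nat).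
  { intros j Hj. destruct (Hx (S j) ltac:(lia)) as [Hx0 HxN].
    assert (0 <= x (S j) / w) by (apply Rmult_le_pos; [lra|apply Rlt_le, Rinv_0_lt_compat, Hw]).
    split; [apply nat_floor_spec; assumption|].
    apply nat_floor_lt; [assumption|]. apply Rmult_lt_reg_r with w; [exact Hw|].
    unfold Rdiv. rewrite Rmult_assoc, Rinv_l; lra. }
  destruct (pigeonhole_injection cl N d p) as [c [i [Hi Hinj]]]; [apply Hcl|exact Hp|].
  exists (fun m => S (i m)). split; [|split].
  - intros m Hm. specialize (Hi m Hm). lia.
  - intros m m' Hm Hm' E. apply Hinj; [exact Hm|exact Hm'|lia].
  - intros m m' Hm Hm'.
    destruct (Hi m Hm) as [Him Hcm]. destruct (Hi m' Hm') as [Him' Hcm'].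
    destruct (Hcl _ Him) as [Hm_cl _]. destruct (Hcl _ Him') as [Hm'_cl _].
    rewrite Hcm in Hm_cl. rewrite Hcm' in Hm'_cl.
    apply Rmult_le_reg_r with (/ w); [apply Rinv_0_lt_compat; exact Hw|].
    rewrite Rmult_plus_distr_r, Rinv_r by lra. unfold Rdiv in *. lra.
Qed.

Lemma dirichlet_approx (th : R) (M : nat) : (2 <= M)%nat ->
  exists k, (1 <= k < M)%nat /\ dist_nint (INR k * th) <= / INR M.
Proof.
  intros HM. assert (HMpos : 0 < INR M) by (apply lt_0_INR; lia).
  set (fr k := frac_part (INR k * th)).
  set (box k := nat_floor (INR M * fr k)).
  assert (Hbox : forall k, INR (box k) <= INR M * fr k < INR (box k) + 1 /\ (box k < M)%nat).
  { intros k. destruct (base_fp (INR k * th)) as [Hfr0 Hfr1]. fold (fr k) in Hfr0, Hfr1.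
    split; [apply nat_floor_spec; nra|apply nat_floor_lt; nra]. }
  assert (Hbox0 : box 0%nat = 0%nat).
  { unfold box, fr, nat_floor. rewrite Rmult_0_l, fp_R0, Rmult_0_r.
    pose proof (Int_part_INR 0) as Hint0. simpl in Hint0. rewrite Hint0. reflexivity. }
  (* the point [k = M] stands for the fractional part 1, placed in the top box *)
  set (cl k := if (k <? M)%nat then box k else pred M).
  destruct (pigeonhole_injection cl M 2 (S M)) as [c [i [Hi Hinj]]].
  { intros k Hk. unfold cl. destruct (Nat.ltb_spec k M); [apply Hbox|lia]. }
  { lia. }
  assert (Hcl : cl (i 0%nat) = cl (i 1%nat)).
  { rewrite (proj2 (Hi 0%nat ltac:(lia))), (proj2 (Hi 1%nat ltac:(lia))). reflexivity. }
  assert (Hne : i 0%nat <> i 1%nat).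
  { intro E. specialize (Hinj 0%nat 1%nat ltac:(lia) ltac:(lia) E). lia. }
  assert (Hx : (i 0 <= M)%nat) by (pose proof (Hi 0%nat ltac:(lia)); lia).
  assert (Hy : (i 1 <= M)%nat) by (pose proof (Hi 1%nat ltac:(lia)); lia).
  assert (Hpair : forall x y, (x < y <= M)%nat -> cl x = cl y ->
            exists k, (1 <= k < M)%nat /\ dist_nint (INR k * th) <= / INR M).
  { intros x y Hxy Hxy_cl. unfold cl in Hxy_cl.
    destruct (Nat.ltb_spec x M) as [HxM|]; [|lia].
    destruct (Nat.ltb_spec y M) as [HyM|HyM].
    - exists (y - x)%nat. split; [lia|].
      apply Rle_trans with (1 := dist_nint_nat_sub_le x y th ltac:(lia)).
      destruct (Hbox x) as [Hbx _]. destruct (Hbox y) as [Hby _]. rewrite Hxy_cl in Hbx.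
      apply Rmult_le_reg_l with (INR M); [exact HMpos|]. rewrite Rinv_r by lra.
      rewrite <- (Rabs_pos_eq (INR M)) at 1 by lra. rewrite <- Rabs_mult.
      apply Rabs_le. fold (fr x) (fr y). lra.
    - assert (Hx0 : x <> 0%nat) by (intro; subst x; rewrite Hbox0 in Hxy_cl; lia).
      exists x. split; [lia|].
      apply Rle_trans with (1 := dist_nint_le_one_minus_frac _).
      destruct (Hbox x) as [[Hbx _] _]. rewrite Hxy_cl in Hbx.
      replace (pred M) with (M - 1)%nat in Hbx by lia. rewrite minus_INR in Hbx by lia.
      apply Rmult_le_reg_l with (INR M); [exact HMpos|]. rewrite Rinv_r by lra.
      fold (fr x). simpl in Hbx. lra. }
  destruct (Nat.lt_total (i 0%nat) (i 1%nat)) as [Hlt|[Heq|Hgt]].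
  - apply (Hpair (i 0%nat) (i 1%nat)); [lia|exact Hcl].
  - contradiction.
  - apply (Hpair (i 1%nat) (i 0%nat)); [lia|symmetry; exact Hcl].
Qed.

Section BestApproximations.
Variables (th : R) (q : nat -> nat).
Hypothesis Hq : best_approx_denoms th q.

Lemma best_approx_denoms_le (a b : nat) : (1 <= a <= b)%nat -> (q a <= q b)%nat.
Proof.
  intros [Ha Hab]. destruct Hq as [_ [Hinc _]].
  induction Hab as [|b Hab IH]; [lia|]. specialize (Hinc b ltac:(lia)). lia.
Qed.

Lemma best_approx_denoms_ge_index (n : nat) : (1 <= n)%nat -> (n <= q n)%nat.
Proof.
  destruct Hq as [Hq1 [Hinc _]]. intros Hn.
  induction Hn as [|n Hn IH]; [lia|]. specialize (Hinc n Hn). lia.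
Qed.

Lemma dist_nint_convergent_le (s : nat) : (1 <= s)%nat ->
  dist_nint (INR (q s) * th) <= / INR (q (S s)).
Proof.
  intros Hs. pose proof (best_approx_denoms_ge_index s Hs) as Hqs.
  destruct Hq as [_ [Hinc Hbest]]. specialize (Hinc s Hs).
  destruct (dirichlet_approx th (q (S s)) ltac:(lia)) as [k [Hk Hdist]].
  destruct (Nat.eq_dec k (q s)) as [->|Hne]; [exact Hdist|].
  specialize (Hbest s k Hs ltac:(lia) ltac:(lia) Hne). lra.
Qed.

End BestApproximations.

Lemma crossing_index (f : nat -> R) (x : R) (a b : nat) :
  (a <= b)%nat -> f a <= x -> x < f b -> exists m, (a <= m < b)%nat /\ f m <= x < f (S m).
Proof.
  intros Hab Ha Hb. induction Hab as [|b Hab IH]; [lra|].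
  destruct (Rle_or_lt (f b) x) as [Hfb|Hfb].
  - exists b. split; [lia|lra].
  - destruct (IH Hfb) as [m [Hm Hfm]]. exists m. split; [lia|exact Hfm].
Qed.

Lemma diophantine_string_or_non_A_index (th tau U V : R) (q : nat -> nat) :
  best_approx_denoms th q -> 1 <= U -> U <= V ->
  (exists l n, (1 <= l)%nat /\ (l < n)%nat /\ (forall s, (l <= s < n)%nat -> in_A tau q s) /\
               INR (q l) <= U /\ V <= INR (q n)) \/
  (exists s, (1 <= s)%nat /\ INR (q s) <= V /\ U < INR (q (S s)) /\
             Rpower (INR (q s)) tau < INR (q (S s))).
Proof.
  intros Hq HU HUV.
  set (n := S (nat_floor V)).
  assert (Hn : V < INR (q n)).
  { pose proof (nat_floor_spec V ltac:(lra)) as HV.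
    pose proof (le_INR _ _ (best_approx_denoms_ge_index th q Hq n ltac:(lia))) as Hqn.
    unfold n in *. rewrite S_INR in Hqn. lra. }
  assert (Hq1 : INR (q 1%nat) <= U) by (destruct Hq as [-> _]; simpl; lra).
  destruct (crossing_index (fun k => INR (q k)) U 1 n ltac:(lia) Hq1 ltac:(lra))
    as [l [Hl [HlU HUl]]].
  destruct (crossing_index (fun k => INR (q k)) V l n ltac:(lia) ltac:(lra) Hn)
    as [m [Hm [HmV HVm]]].
  destruct (classic (forall s, (l <= s < S m)%nat -> in_A tau q s)) as [Hall|Hnot].
  - left. exists l, (S m). split; [lia|]. split; [lia|]. split; [exact Hall|]. lra.
  - right. apply not_all_ex_not in Hnot as [s Hs].
    apply imply_to_and in Hs as [Hs Hnot_A].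
    exists s. split; [lia|]. split; [|split].
    + apply Rle_trans with (2 := HmV). apply le_INR, (best_approx_denoms_le th q Hq). lia.
    + apply Rlt_le_trans with (1 := HUl). apply le_INR, (best_approx_denoms_le th q Hq). lia.
    + apply Rnot_le_lt. intro Hle. apply Hnot_A. split; [lia|exact Hle].
Qed.

Lemma diophantine_string_or_non_A_indices (theta : nat -> R) (q : nat -> nat -> nat)
    (tau U V : R) (p : nat) :
  (forall j, (1 <= j <= p)%nat -> best_approx_denoms (theta j) (q j)) -> 1 <= U -> U <= V ->
  (exists k l n, (1 <= k <= p)%nat /\ (1 <= l)%nat /\ (l < n)%nat /\
     (forall s, (l <= s < n)%nat -> in_A tau (q k) s) /\
     INR (q k l) <= U /\ V <= INR (q k n)) \/
  (exists s : nat -> nat, forall j, (1 <= j <= p)%nat ->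
     (1 <= s j)%nat /\ INR (q j (s j)) <= V /\ U < INR (q j (S (s j))) /\
     Rpower (INR (q j (s j))) tau < INR (q j (S (s j)))).
Proof.
  intros Hq HU HUV.
  destruct (classic (exists k l n, (1 <= k <= p)%nat /\ (1 <= l)%nat /\ (l < n)%nat /\
     (forall s, (l <= s < n)%nat -> in_A tau (q k) s) /\
     INR (q k l) <= U /\ V <= INR (q k n))) as [Hstring|Hnone]; [left; exact Hstring|right].
  apply (functional_choice (fun j s => (1 <= j <= p)%nat ->
    (1 <= s)%nat /\ INR (q j s) <= V /\ U < INR (q j (S s)) /\
    Rpower (INR (q j s)) tau < INR (q j (S s)))).
  intros j.
  destruct (classic (1 <= j <= p)%nat) as [Hj|Hj]; [|exists 0%nat; tauto].
  destruct (diophantine_string_or_non_A_index (theta j) tau U V (q j) (Hq j Hj) HU HUV)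
    as [[l [n Hln]]|[s Hs]].
  - exfalso. apply Hnone. exists j, l, n. tauto.
  - exists s. intros _. exact Hs.
Qed.

Fixpoint nat_prod (f : nat -> nat) (n : nat) : nat :=
  match n with
  | O => 1
  | S n => nat_prod f n * f n
  end.

Lemma nat_prod_ge1 (f : nat -> nat) (n : nat) :
  (forall m, (m < n)%nat -> (1 <= f m)%nat) -> (1 <= nat_prod f n)%nat.
Proof.
  induction n as [|n IH]; simpl; intros Hf; [lia|].
  assert (1 <= nat_prod f n)%nat by (apply IH; auto).
  specialize (Hf n ltac:(lia)). nia.
Qed.

Lemma nat_prod_divide (f : nat -> nat) (n m : nat) :
  (m < n)%nat -> Nat.divide (f m) (nat_prod f n).
Proof.
  induction n as [|n IH]; simpl; intros Hm; [lia|].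
  destruct (Nat.eq_dec m n) as [->|Hne].
  - apply Nat.divide_mul_r, Nat.divide_refl.
  - apply Nat.divide_mul_l, IH. lia.
Qed.

Lemma ln_le (x y : R) : 0 < x -> x <= y -> ln x <= ln y.
Proof.
  intros Hx [Hlt| ->]; [apply Rlt_le, ln_increasing; assumption|lra].
Qed.

Lemma ln_INR_ge0 (n : nat) : (1 <= n)%nat -> 0 <= ln (INR n).
Proof. intros Hn. rewrite <- ln_1. apply ln_le; [lra|apply (le_INR 1 n Hn)]. Qed.

Lemma ln_nat_prod_le (f : nat -> nat) (n : nat) (B : R) :
  (forall m, (m < n)%nat -> (1 <= f m)%nat /\ ln (INR (f m)) <= B) ->
  ln (INR (nat_prod f n)) <= INR n * B.
Proof.
  induction n as [|n IH]; simpl nat_prod; intros Hf.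
  - simpl. rewrite ln_1. lra.
  - destruct (Hf n ltac:(lia)) as [Hfn HBn].
    assert (Hprod : (1 <= nat_prod f n)%nat) by (apply nat_prod_ge1; intros m Hm; apply Hf; lia).
    rewrite mult_INR, ln_mult, S_INR by (apply lt_0_INR; lia).
    assert (ln (INR (nat_prod f n)) <= INR n * B) by (apply IH; intros m Hm; apply Hf; lia).
    lra.
Qed.

(* Writing [Q = R a], [||Q th|| <= R ||a th|| <= R / b]; compare with [C Q^-nu] in log scale. *)
Lemma ln_lower_bound_of_dist_nint (C nu th : R) (a b Q : nat) :
  0 < C -> (1 <= a)%nat -> (1 <= Q)%nat -> (1 <= b)%nat -> Nat.divide a Q ->
  dist_nint (INR a * th) <= / INR b ->
  C * Rpower (INR Q) (- nu) <= dist_nint (INR Q * th) ->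
  ln C + ln (INR a) + ln (INR b) <= (1 + nu) * ln (INR Q).
Proof.
  intros HC Ha HQ Hb [R HR] Hab HQC.
  assert (HR1 : (1 <= R)%nat) by nia.
  assert (HaR : 0 < INR a) by (apply lt_0_INR; lia).
  assert (HbR : 0 < INR b) by (apply lt_0_INR; lia).
  assert (HRR : 0 < INR R) by (apply lt_0_INR; lia).
  assert (Hupper : dist_nint (INR Q * th) <= INR R * / INR b).
  { rewrite HR, mult_INR, Rmult_assoc.
    apply Rle_trans with (1 := dist_nint_nat_mul_le R (INR a * th)).
    apply Rmult_le_compat_l; [apply pos_INR|exact Hab]. }
  assert (Hlog := ln_le _ _ (Rmult_lt_0_compat _ _ HC (exp_pos _)) (Rle_trans _ _ _ HQC Hupper)).
  unfold Rpower in Hlog.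
  rewrite ln_mult, ln_exp, ln_mult, ln_Rinv in Hlog by (auto using exp_pos, Rinv_0_lt_compat).
  rewrite HR, mult_INR, ln_mult in * by assumption. lra.
Qed.

Lemma log_gap (D A w u lnC Lb : R) :
  1 <= D -> 0 <= A -> 2 * D ^ 2 * w <= u -> - (D * w) <= lnC -> u < Lb -> D * A < Lb ->
  D * (A + w) < lnC + A + Lb.
Proof.
  intros HD HA Hw HC Hu HA_Lb.
  destruct (Rle_or_lt (2 * D * w) A) as [Hbig|Hsmall].
  - lra.
  - assert ((D - 1) * A <= (D - 1) * (2 * D * w)) by (apply Rmult_le_compat_l; lra).
    nra.
Qed.

Lemma tau_seq_ge (nu : R) (s : nat) :
  0 < nu -> (1 <= s)%nat -> INR (S s) * (1 + nu) <= tau_seq nu s.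
Proof.
  intros Hnu Hs.
  assert (Hlin : forall n, INR (S n) * (1 + nu) + INR n <= tau_seq nu n + 1).
  { intros n. induction n as [|n IH]; simpl tau_seq.
    - simpl. lra.
    - rewrite (S_INR (S n)), (S_INR n) in *. pose proof (pos_INR n). nra. }
  pose proof (Hlin s). pose proof (le_INR 1 s Hs). simpl in *. lra.
Qed.

Section CommonApproximation.
Variables (nu C D tau w U : R) (d : nat).
Hypotheses (Hnu : 0 < nu) (HC : 0 < C) (Hw : 0 < w) (HU : 0 < U).
Hypotheses (HD : INR d * (1 + nu) <= D) (Htau : D <= tau).
Hypotheses (Hw_U : 2 * D ^ 2 * w <= ln U) (HC_w : - (D * w) <= ln C).

Section Cluster.
Variables (t : nat -> R) (a b : nat -> nat).
Hypothesis Ha : forall m, (m < d)%nat -> (1 <= a m)%nat.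
Hypothesis Ha_window : forall m m', (m < d)%nat -> (m' < d)%nat ->
  ln (INR (a m')) <= ln (INR (a m)) + w.
Hypothesis Hab : forall m, (m < d)%nat -> dist_nint (INR (a m) * t m) <= / INR (b m).
Hypothesis Hb_U : forall m, (m < d)%nat -> U < INR (b m).
Hypothesis Hb_tau : forall m, (m < d)%nat -> Rpower (INR (a m)) tau < INR (b m).

Lemma nat_prod_cluster_dist_lt (m : nat) : (m < d)%nat ->
  dist_nint (INR (nat_prod a d) * t m) < C * Rpower (INR (nat_prod a d)) (- nu).
Proof.
  intros Hm. apply Rnot_le_lt. intros Hdio.
  set (Q := nat_prod a d) in *.
  set (A := ln (INR (a m))).
  assert (HA : 0 <= A) by (apply ln_INR_ge0, Ha, Hm).
  assert (HD1 : 1 <= D).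
  { apply Rle_trans with (2 := HD). pose proof (le_INR 1 d ltac:(lia)). simpl in *. nra. }
  assert (Hb_pos : 0 < INR (b m)).
  { apply Rlt_trans with (2 := Hb_tau m Hm). apply exp_pos. }
  assert (Hb1 : (1 <= b m)%nat) by (apply (INR_lt 0); simpl; exact Hb_pos).
  assert (Hlow : ln C + A + ln (INR (b m)) <= (1 + nu) * ln (INR Q)).
  { apply (ln_lower_bound_of_dist_nint C nu (t m) (a m) (b m) Q HC (Ha m Hm)); auto.
    - apply nat_prod_ge1. exact Ha.
    - apply nat_prod_divide. exact Hm. }
  assert (HQ : ln (INR Q) <= INR d * (A + w)).
  { apply ln_nat_prod_le. intros m' Hm'. split; [exact (Ha m' Hm')|exact (Ha_window m m' Hm Hm')]. }
  assert (Hb_lnU : ln U < ln (INR (b m))) by (apply ln_increasing; auto).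
  assert (Hb_lnA : tau * A < ln (INR (b m))).
  { unfold A. rewrite <- ln_Rpower. apply ln_increasing; [apply exp_pos|auto]. }
  assert (Hgap := log_gap D A w (ln U) (ln C) (ln (INR (b m))) HD1 HA Hw_U HC_w Hb_lnU
                    ltac:(nra)).
  assert ((1 + nu) * ln (INR Q) <= D * (A + w)).
  { apply Rle_trans with ((1 + nu) * (INR d * (A + w))); [apply Rmult_le_compat_l; lra|].
    rewrite <- Rmult_assoc, (Rmult_comm (1 + nu)). apply Rmult_le_compat_r; lra. }
  lra.
Qed.

End Cluster.

Variables (K V : R) (N p : nat) (theta : nat -> R) (q : nat -> nat -> nat) (s : nat -> nat).
Hypotheses (HVK : V <= Rpower U K) (HK_N : K * ln U < INR N * w) (Hp : (N * (d - 1) < p)%nat).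
Hypothesis Hq : forall j, (1 <= j <= p)%nat -> best_approx_denoms (theta j) (q j).
Hypothesis Hs : forall j, (1 <= j <= p)%nat ->
  (1 <= s j)%nat /\ INR (q j (s j)) <= V /\ U < INR (q j (S (s j))) /\
  Rpower (INR (q j (s j))) tau < INR (q j (S (s j))).

Lemma non_A_indices_common_approximation :
  exists i : nat -> nat,
    (forall m, (m < d)%nat -> (1 <= i m <= p)%nat) /\
    (forall m m', (m < d)%nat -> (m' < d)%nat -> i m = i m' -> m = m') /\
    exists Q : nat, (1 <= Q)%nat /\
      forall m, (m < d)%nat -> dist_nint (INR Q * theta (i m)) < C * Rpower (INR Q) (- nu).
Proof.
  set (a j := q j (s j)).
  assert (Ha : forall j, (1 <= j <= p)%nat -> (1 <= a j)%nat).
  { intros j Hj. destruct (Hs j Hj) as [Hsj _].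
    pose proof (best_approx_denoms_ge_index (theta j) (q j) (Hq j Hj) (s j) Hsj). unfold a. lia. }
  assert (Ha_range : forall j, (1 <= j <= p)%nat -> 0 <= ln (INR (a j)) < INR N * w).
  { intros j Hj. split; [apply ln_INR_ge0, Ha, Hj|].
    apply Rle_lt_trans with (2 := HK_N). rewrite <- ln_Rpower.
    apply ln_le; [apply lt_0_INR, Ha, Hj|]. apply Rle_trans with V; [apply Hs, Hj|exact HVK]. }
  destruct (exists_clustered_indices (fun j => ln (INR (a j))) w N d p Hw Ha_range Hp)
    as [i [Hi [Hinj Hwindow]]].
  exists i. split; [exact Hi|]. split; [exact Hinj|].
  exists (nat_prod (fun m => a (i m)) d). split.
  { apply nat_prod_ge1. intros m Hm. apply Ha, Hi, Hm. }
  apply (nat_prod_cluster_dist_lt (fun m => theta (i m)) (fun m => a (i m))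
           (fun m => q (i m) (S (s (i m))))).
  - intros m Hm. apply Ha, Hi, Hm.
  - exact Hwindow.
  - intros m Hm. specialize (Hi m Hm).
    exact (dist_nint_convergent_le _ _ (Hq _ Hi) _ (proj1 (Hs _ Hi))).
  - intros m Hm. apply Hs, Hi, Hm.
  - intros m Hm. apply Hs, Hi, Hm.
Qed.

End CommonApproximation.

Theorem mainTheorem4 (nu K : R) (d : nat) :
  0 < nu -> 0 < K -> (2 <= d)%nat ->
  exists p : nat,
    forall (theta : nat -> R),
      (forall j, (1 <= j <= p)%nat -> irrational (theta j)) ->
      (exists C : R, 0 < C /\
         forall (i : nat -> nat) (k : Z),
           (forall m, (m < d)%nat -> (1 <= i m <= p)%nat) ->
           (forall m m', (m < d)%nat -> (m' < d)%nat -> i m = i m' -> m = m') ->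
           k <> 0%Z ->
           exists m, (m < d)%nat /\
             dist_nint (IZR k * theta (i m)) >= C * Rpower (Rabs (IZR k)) (- nu)) ->
      forall q : nat -> nat -> nat,
        (forall j, (1 <= j <= p)%nat -> best_approx_denoms (theta j) (q j)) ->
        exists U0 : R, forall U V : R,
          0 < U -> U0 <= U -> U <= V -> V <= Rpower U K ->
          exists (k l n : nat),
            (1 <= k <= p)%nat /\ (1 <= l)%nat /\ (l < n)%nat /\
            (forall s, (l <= s < n)%nat -> in_A (tau_seq nu (d - 1)) (q k) s) /\
            INR (q k l) <= U /\ U <= V /\ V <= INR (q k n).
Proof.
  intros Hnu HK Hd.
  set (D := INR d * (1 + nu)).
  assert (HD : 1 <= D) by (unfold D; pose proof (le_INR 2 d Hd); simpl in *; nra).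
  assert (Htau : D <= tau_seq nu (d - 1)).
  { unfold D. replace d with (S (d - 1)) at 1 by lia. apply tau_seq_ge; [exact Hnu|lia]. }
  set (N := S (nat_floor (2 * K * D ^ 2))).
  exists (N * (d - 1) + 1)%nat. intros theta _ [C [HC Hdio]] q Hq.
  (* [U0] makes [D w >= |ln C|] for the window width [w = ln U / (2 D^2)] used below. *)
  exists (exp (2 * D * Rabs (ln C) + 1)). intros U V HU HU0 HUV HVK.
  assert (HlnU : 2 * D * Rabs (ln C) + 1 <= ln U).
  { rewrite <- (ln_exp (2 * D * Rabs (ln C) + 1)). apply ln_le; [apply exp_pos|exact HU0]. }
  assert (HU1 : 1 <= U).
  { apply Rlt_le, ln_lt_inv; [lra|exact HU|]. rewrite ln_1. pose proof (Rabs_pos (ln C)). nra. }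
  destruct (diophantine_string_or_non_A_indices theta q (tau_seq nu (d - 1)) U V
              (N * (d - 1) + 1) Hq HU1 HUV) as [[k [l [n Hstring]]]|[s Hs]];
    [exists k, l, n; tauto|exfalso].
  set (w := ln U / (2 * D ^ 2)).
  assert (Hw_U : 2 * D ^ 2 * w = ln U) by (unfold w; field; lra).
  assert (Hw : 0 < w) by (pose proof (Rabs_pos (ln C)); nra).
  assert (HC_w : - (D * w) <= ln C).
  { pose proof (Rle_abs (- ln C)). rewrite Rabs_Ropp in *. nra. }
  assert (HK_N : K * ln U < INR N * w).
  { rewrite <- Hw_U. unfold N. rewrite S_INR.
    pose proof (nat_floor_spec (2 * K * D ^ 2) ltac:(nra)). nra. }
  destruct (non_A_indices_common_approximation nu C D (tau_seq nu (d - 1)) w U d Hnu HC Hw HU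
              (Rle_refl D) Htau (Req_le _ _ Hw_U) HC_w K V N (N * (d - 1) + 1) theta q s HVK HK_N
              ltac:(lia) Hq Hs) as [i [Hi [Hinj [Q [HQ HQ_lt]]]]].
  destruct (Hdio i (Z.of_nat Q) Hi Hinj ltac:(lia)) as [m [Hm Hge]].
  rewrite <- INR_IZR_INZ, Rabs_pos_eq in Hge by apply pos_INR.
  exact (Rge_not_lt _ _ Hge (HQ_lt m Hm)).
Qed.
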